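(* Suppose $s_0,\dots,s_7\in\sum\mathbb{R}(x,y,z)^2$ satisfy $$s_0\,xy+s_1\,z=s_2+s_3\,x+s_4\,y+s_5\,xz+s_6\,yz+s_7\,xyz.$$ Then $s_i=0$ for all $i=0,\dots,7$.
   Context: $\mathbb{R}(x,y,z)$ is the field of rational functions in three real variables and $\sum\mathbb{R}(x,y,z)^2$ is the set of finite sums of squares of its elements. *)

From HB Require Import structures.
From mathcomp Require Import all_boot all_order all_algebra fraction.
Set Implicit Arguments. Unset Strict Implicit. Unset Printing Implicit Defensive.
Import Order.TTheory GRing.Theory Num.Theory.
Local Open Scope ring_scope.

Definition RX (R : rcfType) : fieldType := {fraction {poly R}}.
Definition RXY (R : rcfType) : fieldType := {fraction {poly RX R}}.
Definition RXYZ (R : rcfType) : fieldType := {fraction {poly RXY R}}.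

Definition varX1 (R : rcfType) : RX R := FracField.tofrac 'X.
Definition varX2 (R : rcfType) : RXY R := FracField.tofrac (varX1 R)%:P.
Definition varY2 (R : rcfType) : RXY R := FracField.tofrac 'X.

Definition varX (R : rcfType) : RXYZ R := FracField.tofrac (varX2 R)%:P.
Definition varY (R : rcfType) : RXYZ R := FracField.tofrac (varY2 R)%:P.
Definition varZ (R : rcfType) : RXYZ R := FracField.tofrac 'X.

Definition is_sos (K : fieldType) (f : K) : Prop :=
  exists s : seq K, f = \sum_(g <- s) g ^+ 2.

(* Call a list of coefficients [c_i] anisotropic when [\sum_i c_i * s_i = 0]
   with sums of squares [s_i] forces every [s_i] to vanish.  The heart of the
   proof is a Springer-type step: if [A] and [B] are anisotropic over a field [K],
   so is [A ++ X * B] over [K(X)].  After clearing denominators the relation lives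
   in [K[X]]; evaluating at [X = 0] and using the anisotropy of [A] shows that [X]
   divides every generator of the [A]-part, and dividing these by [X] and
   cancelling one factor [X] exchanges the roles of [A] and [B] while lowering all
   degrees.  The relation of the theorem says that the form
   [-1, -x, -y, xy, z, -xz, -yz, -xyz] represents zero with the weights
   [s2, s3, s4, s0, s1, s5, s6, s7]; three such steps build this form from [-1]
   and [1] over the real closed field [R], where they are clearly anisotropic. *)

From Pilot Require Import Defs.
From HB Require Import structures.
From mathcomp Require Import all_boot all_order all_algebra fraction generic_quotient.
From mathcomp Require Import ring.
Import GRing.Theory Num.Theory.
Set Implicit Arguments. Unset Strict Implicit.
Local Open Scope ring_scope.

Section SosCombination.
Variable R : comNzRingType.
Implicit Types (c : R) (cs : seq R) (s : seq R) (ss : seq (seq R)).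

Definition sos s := \sum_(g <- s) g ^+ 2.

(* A sum of squares is represented by the list [s] of its generators, so [ss]
   below lists the generators of every weight; [zip] silently drops surplus
   entries, hence the size condition in [anisotropic]. *)
Definition sos_comb cs ss := \sum_(x <- zip cs ss) x.1 * sos x.2.

Definition gens_eq0 ss := all (all (fun g => g == 0)) ss.

Definition anisotropic cs :=
  forall ss, size ss = size cs -> sos_comb cs ss = 0 -> gens_eq0 ss.

Lemma sos_eq0 s : all (fun g => g == 0) s -> sos s = 0.
Proof.
by move=> /allP s0; rewrite /sos big1_seq // => g /andP[_ /s0/eqP->]; rewrite expr0n.
Qed.

Lemma sos_combl0 ss : sos_comb [::] ss = 0.
Proof. by case: ss => [|s ss]; rewrite /sos_comb big_nil. Qed.

Lemma sos_combr0 cs : sos_comb cs [::] = 0.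
Proof. by case: cs => [|c cs]; rewrite /sos_comb big_nil. Qed.

Lemma sos_comb_cons c cs s ss :
  sos_comb (c :: cs) (s :: ss) = c * sos s + sos_comb cs ss.
Proof. by rewrite /sos_comb big_cons. Qed.

Lemma sos_comb_cat cs1 cs2 ss1 ss2 : size ss1 = size cs1 ->
  sos_comb (cs1 ++ cs2) (ss1 ++ ss2) = sos_comb cs1 ss1 + sos_comb cs2 ss2.
Proof. by move=> size_ss1; rewrite /sos_comb zip_cat // big_cat. Qed.

Lemma sos_combMl a cs ss : sos_comb (map ( *%R a) cs) ss = a * sos_comb cs ss.
Proof.
elim: cs ss => [|c cs IH] [|s ss]; rewrite ?sos_combl0 ?sos_combr0 ?mulr0 //=.
by rewrite !sos_comb_cons IH mulrDr mulrA.
Qed.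

Lemma sosMr a s : sos (map ( *%R^~ a) s) = a ^+ 2 * sos s.
Proof.
by rewrite /sos big_map mulr_sumr; apply: eq_bigr => g _; rewrite exprMn mulrC.
Qed.

Lemma sos_combMr a cs ss :
  sos_comb cs (map (map ( *%R^~ a)) ss) = a ^+ 2 * sos_comb cs ss.
Proof.
elim: cs ss => [|c cs IH] [|s ss]; rewrite ?sos_combl0 ?sos_combr0 ?mulr0 //=.
by rewrite !sos_comb_cons IH sosMr mulrDr mulrCA.
Qed.

End SosCombination.

Lemma gens_eq0_map (R S : comNzRingType) (f : R -> S) (ss : seq (seq R)) :
  gens_eq0 (map (map f) ss) = all (all (fun g => f g == 0)) ss.
Proof. by rewrite /gens_eq0 all_map; apply: eq_all => s /=; rewrite all_map. Qed.

Lemma rmorph_sos_comb (R S : comNzRingType) (f : {rmorphism R -> S}) cs ss :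
  f (sos_comb cs ss) = sos_comb (map f cs) (map (map f) ss).
Proof.
elim: cs ss => [|c cs IH] [|s ss]; rewrite ?sos_combl0 ?sos_combr0 ?rmorph0 //=.
rewrite !sos_comb_cons rmorphD rmorphM IH /sos rmorph_sum big_map.
by congr (_ * _ + _); apply: eq_bigr => g _; rewrite rmorphXn.
Qed.

Lemma anisotropic1 (R : realDomainType) (c : R) : c != 0 -> anisotropic [:: c].
Proof.
move=> c0 [|s [|s' ss]] //= _; rewrite sos_comb_cons sos_combl0 addr0 => /eqP.
rewrite mulf_eq0 (negbTE c0) /= /sos psumr_eq0 => [s0|g _]; last exact: sqr_ge0.
by rewrite /gens_eq0 /= andbT; apply: sub_all s0 => g; rewrite sqrf_eq0.
Qed.

Lemma leq_bigmax_seq2 (T : eqType) (f : T -> nat) (ss : seq (seq T)) :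
  all (all (fun x => f x <= \max_(s <- ss) \max_(y <- s) f y)%N) ss.
Proof.
apply/allP => s s_ss; apply/allP => x x_s.
exact: leq_trans (leq_bigmax_seq _ x_s erefl) (leq_bigmax_seq _ s_ss erefl).
Qed.

Section PolynomialForms.
Variable K : fieldType.
Implicit Types (A B : seq K) (ss : seq (seq {poly K})).

Lemma sos_comb_polyC_dvdX A ss V : anisotropic A -> size ss = size A ->
  sos_comb (map polyC A) ss + 'X * V = 0 -> all (all (fun p => 'X %| p)) ss.
Proof.
move=> anisoA size_ss /(congr1 (horner_eval 0)).
rewrite rmorphD rmorphM rmorph0 rmorph_sos_comb /= horner_evalE hornerX mul0r addr0.
rewrite -map_comp (@eq_map _ _ _ id) ?map_id => [|c]; last exact: hornerC.
move=> /anisoA; rewrite size_map => /(_ size_ss); rewrite gens_eq0_map.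
apply: sub_all => s; apply: sub_all => p p0.
by rewrite -[X in X %| _]subr0 -polyC0 dvdp_XsubCl.
Qed.

Lemma divpK_gens (d : {poly K}) ss : all (all (fun p => d %| p)) ss ->
  map (map ( *%R^~ d)) (map (map (fun p => p %/ d)) ss) = ss.
Proof.
move=> d_ss; rewrite -map_comp; apply: map_id_in => s /(allP d_ss) d_s /=.
by rewrite -map_comp; apply: map_id_in => p /(allP d_s) /divpK.
Qed.

Lemma cancelX (a b : {poly K}) : 'X ^+ 2 * a + 'X * b = 0 -> b + 'X * a = 0.
Proof.
move=> e; have /eqP : 'X * (b + 'X * a) = 0 by rewrite mulrDr mulrA -expr2 addrC.
by rewrite mulf_eq0 polyX_eq0 => /eqP.
Qed.

Lemma sos_comb_polyX_eq0 A B n ss1 ss2 : anisotropic A -> anisotropic B ->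
  size ss1 = size A -> size ss2 = size B ->
  all (all (fun p : {poly K} => size p <= n)%N) (ss1 ++ ss2) ->
  sos_comb (map polyC A) ss1 + 'X * sos_comb (map polyC B) ss2 = 0 ->
  gens_eq0 (ss1 ++ ss2).
Proof.
move=> anisoA anisoB; elim: n ss1 ss2 => [|n IHn] ss1 ss2 size1 size2 sizes e.
  by apply: sub_all sizes => s; apply: sub_all => p; rewrite leqn0 size_poly_eq0.
set ss1' := map (map (fun p => p %/ 'X)) ss1.
set ss2' := map (map (fun p => p %/ 'X)) ss2.
have ss1K := divpK_gens (sos_comb_polyC_dvdX anisoA size1 e).
rewrite -ss1K sos_combMr in e; move/cancelX: e => e.
have ss2K := divpK_gens (sos_comb_polyC_dvdX anisoB size2 e).
rewrite -ss2K sos_combMr in e; move/cancelX: e => e.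
have sizes' : all (all (fun p : {poly K} => size p <= n)%N) (ss1' ++ ss2').
  rewrite -map_cat all_map; apply: sub_all sizes => s; rewrite /= all_map.
  apply: sub_all => p /= size_p; rewrite size_divp ?polyX_eq0 // size_polyX.
  by rewrite leq_subLR add1n.
have := IHn _ _ _ _ sizes' e; rewrite ?size_map // => /(_ size1 size2) ss'0.
rewrite -ss1K -ss2K -map_cat gens_eq0_map.
by apply: sub_all ss'0 => s; apply: sub_all => p /eqP ->; rewrite mul0r.
Qed.

Lemma anisotropic_polyX A B : anisotropic A -> anisotropic B ->
  anisotropic (map polyC A ++ map ( *%R 'X) (map polyC B)).
Proof.
move=> anisoA anisoB ss; rewrite size_cat !size_map => size_ss.
rewrite -[ss](cat_take_drop (size A)).
have size1 : size (take (size A) ss) = size A by rewrite size_takel // size_ss leq_addr.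
have size2 : size (drop (size A) ss) = size B by rewrite size_drop size_ss addKn.
rewrite sos_comb_cat ?size_map // sos_combMl.
exact: sos_comb_polyX_eq0 anisoA anisoB size1 size2 (leq_bigmax_seq2 _ _).
Qed.

End PolynomialForms.

Section FractionForms.
Variable R : idomainType.
Local Notation tofrac := (@FracField.tofrac R).

Lemma tofrac_numer_denom (x : {fraction R}) :
  exists n d, d != 0 /\ x * tofrac d = tofrac n.
Proof.
elim/quotW: x => r; exists (\n_r), (\d_r); split; first exact: denom_ratioP.
unlock FracField.tofrac; rewrite -[_ * _]/(FracField.mul _ _) !piE.
apply/eqmodP; rewrite /= FracField.equivfE /FracField.mulf.
rewrite !numden_Ratio ?mulf_neq0 ?oner_neq0 ?denom_ratioP //.
by rewrite !mulr1 mulrC.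
Qed.

Lemma common_denominator (s : seq {fraction R}) :
  exists2 d, d != 0 & exists ps, map ( *%R^~ (tofrac d)) s = map tofrac ps.
Proof.
elim: s => [|x s [d d0 [ps sd]]]; first by exists 1; [exact: oner_neq0 | exists [::]].
have [n [e [e0 xe]]] := tofrac_numer_denom x.
exists (d * e); first by rewrite mulf_neq0.
exists (n * d :: map ( *%R^~ e) ps) => /=; congr (_ :: _).
  by rewrite !rmorphM mulrCA xe mulrC.
transitivity (map ( *%R^~ (tofrac e)) (map ( *%R^~ (tofrac d)) s)).
  by rewrite -map_comp; apply: eq_map => y /=; rewrite rmorphM mulrA.
by rewrite sd -!map_comp; apply: eq_map => p /=; rewrite rmorphM.
Qed.

Lemma common_denominator2 (ss : seq (seq {fraction R})) :
  exists2 d, d != 0 &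
    exists pss, map (map ( *%R^~ (tofrac d))) ss = map (map tofrac) pss.
Proof.
have [d d0 [ps sd]] := common_denominator (flatten ss).
exists d => //; exists (reshape (shape ss) ps).
by rewrite map_reshape -sd -map_reshape flattenK.
Qed.

Lemma anisotropic_tofrac cs : anisotropic cs -> anisotropic (map tofrac cs).
Proof.
move=> anisoC ss; rewrite size_map => size_ss comb0.
have [d d0 [pss ssd]] := common_denominator2 ss.
have size_pss : size pss = size cs.
  by rewrite -size_ss -(size_map (map tofrac)) -ssd size_map.
have /eqP : tofrac (sos_comb cs pss) = 0.
  by rewrite rmorph_sos_comb -ssd sos_combMr comb0 mulr0.
rewrite tofrac_eq0 => /eqP /(anisoC _ size_pss) pss0.
have : gens_eq0 (map (map tofrac) pss).
  rewrite gens_eq0_map; apply: sub_all pss0 => s.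
  by apply: sub_all => p /eqP ->; rewrite rmorph0.
rewrite -ssd gens_eq0_map; apply: sub_all => s; apply: sub_all => x.
by rewrite mulf_eq0 tofrac_eq0 (negbTE d0) orbF.
Qed.

End FractionForms.

Definition extends_anisotropy (K L : comNzRingType) (f : K -> L) (t : L) :=
  forall A B, anisotropic A -> anisotropic B ->
    anisotropic (map f A ++ map (fun c => t * f c) B).

Lemma extends_anisotropy_fracX (K : fieldType) :
  extends_anisotropy (fun c : K => FracField.tofrac c%:P) (FracField.tofrac 'X).
Proof.
move=> A B anisoA anisoB; have := anisotropic_tofrac (anisotropic_polyX anisoA anisoB).
by rewrite map_cat -!map_comp; under [X in _ ++ X]eq_map do rewrite /= rmorphM.
Qed.

Lemma anisotropic_tower (K0 K1 K2 L : comNzRingType)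
    (f1 : {rmorphism K0 -> K1}) (f2 : {rmorphism K1 -> K2}) (f3 : {rmorphism K2 -> L})
    (t1 : K1) (t2 : K2) (z : L) :
  anisotropic [:: -1 : K0] -> anisotropic [:: 1 : K0] ->
  extends_anisotropy f1 t1 -> extends_anisotropy f2 t2 -> extends_anisotropy f3 z ->
  let x := f3 (f2 t1) in let y := f3 t2 in
  anisotropic [:: -1; -x; -y; x * y; z; - (x * z); - (y * z); - (x * y * z)].
Proof.
move=> m1 p1 ext1 ext2 ext3 x y.
have /= aniso := ext3 _ _ (ext2 _ _ (ext1 _ _ m1 m1) (ext1 _ _ m1 p1))
                          (ext2 _ _ (ext1 _ _ p1 m1) (ext1 _ _ m1 m1)).
apply: (eq_ind _ _ aniso); rewrite !rmorphM !rmorphN1 !rmorph1 -/x -/y.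
by congr [:: _; _; _; _; _; _; _; _]; ring.
Qed.

Lemma sos_comb_relation (L : comNzRingType) (x y z : L)
    (a0 a1 a2 a3 a4 a5 a6 a7 : seq L) :
  sos a0 * (x * y) + sos a1 * z =
    sos a2 + sos a3 * x + sos a4 * y + sos a5 * (x * z)
    + sos a6 * (y * z) + sos a7 * (x * y * z) ->
  sos_comb [:: -1; -x; -y; x * y; z; - (x * z); - (y * z); - (x * y * z)]
    [:: a2; a3; a4; a0; a1; a5; a6; a7] = 0.
Proof.
move/eqP; rewrite -subr_eq0 => /eqP <-.
by rewrite !sos_comb_cons sos_combl0; ring.
Qed.

Section RationalFunctions.
Variable R : rcfType.

(* Typed with the fields of [Defs], so that [varX R] is convertible to
   [constXYZ (constXY (varX1 R))] and [varY R] to [constXYZ (varY2 R)]. *)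
Definition constX (c : R) : RX R := FracField.tofrac c%:P.
Definition constXY (c : RX R) : RXY R := FracField.tofrac c%:P.
Definition constXYZ (c : RXY R) : RXYZ R := FracField.tofrac c%:P.
HB.instance Definition _ := GRing.RMorphism.copy constX (@FracField.tofrac _ \o polyC).
HB.instance Definition _ := GRing.RMorphism.copy constXY (@FracField.tofrac _ \o polyC).
HB.instance Definition _ := GRing.RMorphism.copy constXYZ (@FracField.tofrac _ \o polyC).

Lemma anisotropic_form :
  let x := varX R in let y := varY R in let z := varZ R in
  anisotropic [:: -1; -x; -y; x * y; z; - (x * z); - (y * z); - (x * y * z)].
Proof.
apply: (anisotropic_tower (f1 := constX) (f2 := constXY) (f3 := constXYZ)
  (t1 := varX1 R) (t2 := varY2 R)).
- by apply: anisotropic1; rewrite oppr_eq0 oner_eq0.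
- by apply: anisotropic1; rewrite oner_eq0.
- exact: extends_anisotropy_fracX.
- exact: extends_anisotropy_fracX.
- exact: extends_anisotropy_fracX.
Qed.

End RationalFunctions.

Theorem mainTheorem6 (R : rcfType) (s0 s1 s2 s3 s4 s5 s6 s7 : RXYZ R) :
  is_sos s0 -> is_sos s1 -> is_sos s2 -> is_sos s3 ->
  is_sos s4 -> is_sos s5 -> is_sos s6 -> is_sos s7 ->
  s0 * (varX R * varY R) + s1 * varZ R =
    s2 + s3 * varX R + s4 * varY R + s5 * (varX R * varZ R)
    + s6 * (varY R * varZ R) + s7 * (varX R * varY R * varZ R) ->
  s0 = 0 /\ s1 = 0 /\ s2 = 0 /\ s3 = 0 /\ s4 = 0 /\ s5 = 0 /\ s6 = 0 /\ s7 = 0.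
Proof.
move=> [a0 ->] [a1 ->] [a2 ->] [a3 ->] [a4 ->] [a5 ->] [a6 ->] [a7 ->] relation.
have /allP gens0 := @anisotropic_form R [:: a2; a3; a4; a0; a1; a5; a6; a7] erefl
  (sos_comb_relation relation).
have sos0 a : a \in [:: a2; a3; a4; a0; a1; a5; a6; a7] -> \sum_(g <- a) g ^+ 2 = 0.
  by move=> /gens0 /sos_eq0.
by rewrite !sos0 // !inE eqxx ?orbT.
Qed.
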